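(* Assume the bounded-feature assumption: there is $\Phi>0$ with $\|\phi_{y,x}\|\le\Phi$ for all inputs $x$ and outputs $y$. Consider the alternating procedure (ALRIGHT) described in the context, run for $T$ iterations with constant step size $\alpha_t=\alpha_0/\sqrt{T}$ for all $t\in\{1,\dots,T\}$, where $\alpha_0>0$. Then for any $\lambda\in[0,1]$ its output $\hat\theta_{\mathrm{AL}}=\theta_T$ satisfies $$\mathbb{E}\Big[\lambda f_{\mathrm{DPO}}(\hat\theta_{\mathrm{AL}})+(1-\lambda)f_{\mathrm{SFT}}(\hat\theta_{\mathrm{AL}})-\min_{\theta\in\Theta}\big(\lambda f_{\mathrm{DPO}}(\theta)+(1-\lambda)f_{\mathrm{SFT}}(\theta)\big)\Big]=\mathcal{O}\Big(\frac{\log T}{\sqrt T}\Big),$$ where the expectation is over the randomness of the procedure.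
   Context: Parameter set $\Theta\subseteq\mathbb{R}^d$ is a nonempty closed convex set on which the minimum above is attained, and $\Pi_\Theta$ is Euclidean projection onto it. Policy model: for a finite output set $\mathcal{Y}$, $\pi_\theta(y\mid x)=\exp(\theta^\top\phi_{y,x})/\sum_{y'\in\mathcal{Y}}\exp(\theta^\top\phi_{y',x})$ with feature vectors $\phi_{y,x}\in\mathbb{R}^d$; the reference policy is $\pi_{\mathrm{ref}}=\pi_{\theta_{\mathrm{ref}}}$ for a fixed $\theta_{\mathrm{ref}}$. Datasets: $\mathcal{D}_{\mathrm{DPO}}=\{(x^{(i)},y_w^{(i)},y_\ell^{(i)})\}_{i=1}^{N_1}$ (input, preferred, dispreferred response) and $\mathcal{D}_{\mathrm{SFT}}=\{(x^{(i)},y^{(i)})\}_{i=1}^{N_2}$. With $\sigma$ the sigmoid and $\beta>0$, $h_\beta(\theta;x,y_w,y_\ell)=\beta\log\frac{\pi_\theta(y_w|x)}{\pi_{\mathrm{ref}}(y_w|x)}-\beta\log\frac{\pi_\theta(y_\ell|x)}{\pi_{\mathrm{ref}}(y_\ell|x)}$, $f_{\mathrm{DPO}}(\theta)=-\frac1{N_1}\sum_{\mathcal{D}_{\mathrm{DPO}}}\log\sigma(h_\beta(\theta;x,y_w,y_\ell))$, $f_{\mathrm{SFT}}(\theta)=-\frac1{N_2}\sum_{\mathcal{D}_{\mathrm{SFT}}}\log\pi_\theta(y|x)$, $g_{\mathrm{DPO}}(\theta;x,y_w,y_\ell)=-(1-\sigma(h_\beta))\nabla_\theta h_\beta(\theta;x,y_w,y_\ell)$,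 $g_{\mathrm{SFT}}(\theta;x,y)=-\nabla_\theta\pi_\theta(y|x)/\pi_\theta(y|x)$. ALRIGHT (inputs: datasets, step sizes $\{\alpha_t\}$, $\lambda\in[0,1]$, initialization $\theta_1\in\Theta$): for $t=1,\dots,T-1$, sample $i_t\sim\mathrm{Bernoulli}(\lambda)$; if $i_t=1$, sample $(x^t,y_w^t,y_\ell^t)$ uniformly from $\mathcal{D}_{\mathrm{DPO}}$ and set $\theta_{t+1}=\Pi_\Theta(\theta_t-\alpha_tg_{\mathrm{DPO}}(\theta_t;x^t,y_w^t,y_\ell^t))$; otherwise sample $(x^t,y^t)$ uniformly from $\mathcal{D}_{\mathrm{SFT}}$ and set $\theta_{t+1}=\Pi_\Theta(\theta_t-\alpha_tg_{\mathrm{SFT}}(\theta_t;x^t,y^t))$. Output $\theta_T$. *)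

From HB Require Import structures.
From mathcomp Require Import all_boot all_order all_algebra.
From mathcomp Require Import all_classical all_reals all_analysis.
Set Implicit Arguments.
Unset Strict Implicit.
Unset Printing Implicit Defensive.
Import Order.TTheory GRing.Theory Num.Theory.
Local Open Scope ring_scope.
Local Open Scope classical_set_scope.

Section ALRIGHT.
Variable R : realType.
Variable d : nat.

Definition dotv (u v : 'rV[R]_d) : R := \sum_(i < d) u 0 i * v 0 i.
Definition enorm (u : 'rV[R]_d) : R := Num.sqrt (dotv u u).

Definition is_euclid_proj (S : set 'rV[R]_d) (P : 'rV[R]_d -> 'rV[R]_d) : Prop :=
  forall u, S (P u) /\ forall z, S z -> enorm (u - P u) <= enorm (u - z).

Variables (X : Type) (Y : finType) (phi : Y -> X -> 'rV[R]_d).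

Definition pi (th : 'rV[R]_d) (y : Y) (x : X) : R :=
  expR (dotv th (phi y x)) / \sum_(y' : Y) expR (dotv th (phi y' x)).

(* gradient of theta |-> log pi_theta(y|x), i.e. grad pi / pi (closed form
   for the softmax policy) *)
Definition grad_logpi (th : 'rV[R]_d) (y : Y) (x : X) : 'rV[R]_d :=
  phi y x - \sum_(y' : Y) pi th y' x *: phi y' x.

Definition sigmoid (z : R) : R := 1 / (1 + expR (- z)).

Variables (theta_ref : 'rV[R]_d) (beta : R).

Definition h_beta (th : 'rV[R]_d) (s : X * Y * Y) : R :=
  let: (x, yw, yl) := s in
  beta * ln (pi th yw x / pi theta_ref yw x)
  - beta * ln (pi th yl x / pi theta_ref yl x).

Definition grad_h_beta (th : 'rV[R]_d) (s : X * Y * Y) : 'rV[R]_d :=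
  let: (x, yw, yl) := s in
  beta *: (grad_logpi th yw x - grad_logpi th yl x).

Definition g_DPO (th : 'rV[R]_d) (s : X * Y * Y) : 'rV[R]_d :=
  - ((1 - sigmoid (h_beta th s)) *: grad_h_beta th s).

Definition g_SFT (th : 'rV[R]_d) (s : X * Y) : 'rV[R]_d :=
  - grad_logpi th s.2 s.1.

Variables (D1 : seq (X * Y * Y)) (D2 : seq (X * Y)).

Definition f_DPO (th : 'rV[R]_d) : R :=
  - ((size D1)%:R^-1 * \sum_(s <- D1) ln (sigmoid (h_beta th s))).

Definition f_SFT (th : 'rV[R]_d) : R :=
  - ((size D2)%:R^-1 * \sum_(s <- D2) ln (pi th s.2 s.1)).

Definition objective (lambda : R) (th : 'rV[R]_d) : R :=
  lambda * f_DPO th + (1 - lambda) * f_SFT th.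

(* Exact expectation of F(theta after n ALRIGHT iterations from theta), with
   constant step size alpha, mixing probability lambda, projection P:
   i_t ~ Bernoulli(lambda), then a uniform sample from the chosen dataset. *)
Fixpoint alright_expect (P : 'rV[R]_d -> 'rV[R]_d) (alpha lambda : R)
    (F : 'rV[R]_d -> R) (n : nat) (th : 'rV[R]_d) {struct n} : R :=
  match n with
  | 0 => F th
  | n'.+1 =>
      lambda * ((size D1)%:R^-1 *
        \sum_(s <- D1) alright_expect P alpha lambda F n' (P (th - alpha *: g_DPO th s)))
      + (1 - lambda) * ((size D2)%:R^-1 *
        \sum_(s <- D2) alright_expect P alpha lambda F n' (P (th - alpha *: g_SFT th s)))
  end.

End ALRIGHT.

From Pilot Require Import Defs.
From HB Require Import structures.
From mathcomp Require Import all_boot all_order all_algebra.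
From mathcomp Require Import all_classical all_reals all_analysis.
From mathcomp Require Import ring lra zify.

(* Each ALRIGHT step is a projected stochastic subgradient step for the convex objective
   f = lambda f_DPO + (1 - lambda) f_SFT: both per-sample losses are convex in theta (the
   SFT loss is a log-sum-exp of linear maps, the DPO loss a softplus of one) and their
   gradients are bounded in terms of Phi and beta. Nonexpansiveness of the projection then
   gives, for the one-step expectation operator K and every z in Theta, the descent inequality
     K |. - z|^2 (th) <= |th - z|^2 - 2 alpha (f th - f z) + alpha^2 G.
   Iterated at z = theta_star it bounds the average of the expected objective values of the
   iterates; applied at the random point z = theta_j it bounds every suffix average against
   its first term. The harmonic-sum argument of Shamir and Zhang turns these into a bound on
   the last iterate of order (1 + log T) / sqrt T when alpha = alpha0 / sqrt T. *)

Set Implicit Arguments.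
Unset Strict Implicit.
Unset Printing Implicit Defensive.

Import Order.TTheory GRing.Theory Num.Theory.
Local Open Scope ring_scope.
Local Open Scope classical_set_scope.

Section DotProduct.
Context {R : realType} {d : nat}.
Implicit Types u v w : 'rV[R]_d.

Lemma dotvC u v : dotv u v = dotv v u.
Proof. by apply: eq_bigr => i _; rewrite mulrC. Qed.

Lemma dotvDl u v w : dotv (u + v) w = dotv u w + dotv v w.
Proof. by rewrite /dotv -big_split; apply: eq_bigr => i _; rewrite !mxE mulrDl. Qed.

Lemma dotvZl (a : R) u w : dotv (a *: u) w = a * dotv u w.
Proof. by rewrite /dotv mulr_sumr; apply: eq_bigr => i _; rewrite !mxE mulrA. Qed.

Lemma dotvNl u w : dotv (- u) w = - dotv u w.
Proof. by rewrite -scaleN1r dotvZl mulN1r. Qed.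

Lemma dotvDr u v w : dotv w (u + v) = dotv w u + dotv w v.
Proof. by rewrite dotvC dotvDl !(dotvC w). Qed.

Lemma dotvZr (a : R) u w : dotv w (a *: u) = a * dotv w u.
Proof. by rewrite dotvC dotvZl dotvC. Qed.

Lemma dotvNr u w : dotv w (- u) = - dotv w u.
Proof. by rewrite dotvC dotvNl dotvC. Qed.

Definition dotvE := (dotvDl, dotvDr, dotvNl, dotvNr, dotvZl, dotvZr).

Lemma dotv_suml (I : Type) (r : seq I) (F : I -> 'rV[R]_d) w :
  dotv (\sum_(i <- r) F i) w = \sum_(i <- r) dotv (F i) w.
Proof.
elim: r => [|a r IH]; last by rewrite !big_cons dotvDl IH.
by rewrite !big_nil /dotv big1 // => i _; rewrite mxE mul0r.
Qed.

Lemma dotvv_ge0 u : 0 <= dotv u u.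
Proof. by apply: sumr_ge0 => i _; rewrite -expr2 sqr_ge0. Qed.

Lemma dotvv_enorm u : dotv u u = enorm u ^+ 2.
Proof. by rewrite sqr_sqrtr // dotvv_ge0. Qed.

Lemma dotvv_subr_le u v : dotv (u - v) (u - v) <= 2 * dotv u u + 2 * dotv v v.
Proof. by have := dotvv_ge0 (u + v); rewrite !dotvE (dotvC v u); lra. Qed.

Lemma dotvv_mean_le (I : finType) (p : I -> R) (v : I -> 'rV[R]_d) :
  (forall i, 0 <= p i) -> \sum_i p i = 1 ->
  dotv (\sum_i p i *: v i) (\sum_i p i *: v i) <= \sum_i p i * dotv (v i) (v i).
Proof.
move=> p_ge0 p_sum1; set m := \sum_i p i *: v i.
have var_ge0 : 0 <= \sum_i p i * dotv (v i - m) (v i - m).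
  by apply: sumr_ge0 => i _; rewrite mulr_ge0 ?dotvv_ge0.
have cross : \sum_i p i * dotv (v i) m = dotv m m.
  by rewrite [in RHS]/m dotv_suml; apply: eq_bigr => i _; rewrite dotvZl.
have expand : \sum_i p i * dotv (v i - m) (v i - m) =
    \sum_i p i * dotv (v i) (v i) - 2 * \sum_i p i * dotv (v i) m
    + (\sum_i p i) * dotv m m.
  rewrite mulr_sumr mulr_suml -sumrB -big_split /=; apply: eq_bigr => i _.
  by rewrite !dotvE (dotvC m (v i)); ring.
by move: var_ge0; rewrite expand cross p_sum1; lra.
Qed.

End DotProduct.

Section Mean.
Context {R : numFieldType} {T : Type}.
Implicit Types (r : seq T) (F G : T -> R).

Definition mean r F : R := (size r)%:R^-1 * \sum_(s <- r) F s.

Lemma mean_le r F G : (forall s, F s <= G s) -> mean r F <= mean r G.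
Proof. by move=> FG; rewrite ler_wpM2l ?invr_ge0 ?ler0n ?ler_sum. Qed.

Lemma meanD r F G : mean r (fun s => F s + G s) = mean r F + mean r G.
Proof. by rewrite /mean big_split mulrDr. Qed.

Lemma meanZ r (a : R) F : mean r (fun s => a * F s) = a * mean r F.
Proof. by rewrite /mean -mulr_sumr mulrCA. Qed.

Lemma meanN r F : mean r (fun s => - F s) = - mean r F.
Proof. by rewrite /mean sumrN mulrN. Qed.

Lemma meanB r F G : mean r (fun s => F s - G s) = mean r F - mean r G.
Proof. by rewrite meanD meanN. Qed.

Lemma mean_cst r (c : R) : (0 < size r)%N -> mean r (fun=> c) = c.
Proof.
move=> r_gt0; rewrite /mean big_const_seq count_predT iter_addr addr0.
by rewrite -[c *+ _]mulr_natl mulrA mulVf ?mul1r // pnatr_eq0 -lt0n.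
Qed.

End Mean.

Section Projection.
Context {R : realType} {d : nat}.
Implicit Types u z a b : 'rV[R]_d.

Lemma ler_enorm u z : (enorm u <= enorm z) = (dotv u u <= dotv z z).
Proof. by rewrite ler_sqrt ?dotvv_ge0. Qed.

Lemma convex_set_segment (S : set 'rV[R]_d) u z (t : R) :
  convex_set S -> S u -> S z -> 0 <= t <= 1 -> S (t *: u + (1 - t) *: z).
Proof.
move=> convS Su Sz /andP[t_ge0 t_le1].
by have := convS u z (Itv01 t_ge0 t_le1); rewrite !inE; apply.
Qed.

Lemma dotv_le0_of_segment_min a b :
  (forall t, 0 < t <= 1 -> dotv a a <= dotv (a - t *: b) (a - t *: b)) ->
  dotv a b <= 0.
Proof.
move=> amin; rewrite leNgt; apply/negP => ab_gt0.
have bb_ge0 := dotvv_ge0 b.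
set c := dotv a b in ab_gt0.
pose t := c / (c + dotv b b).
have t_gt0 : 0 < t by rewrite divr_gt0 //; lra.
have t_le1 : t <= 1 by rewrite ler_pdivrMr; lra.
have := amin t; rewrite t_gt0 t_le1 !dotvE (dotvC b a) -/c => /(_ isT) ht.
have : t * (2 * c) <= t * (t * dotv b b) by lra.
rewrite ler_pM2l // /t mulrAC ler_pdivlMr; nra.
Qed.

Variables (S : set 'rV[R]_d) (P : 'rV[R]_d -> 'rV[R]_d).
Hypotheses (projP : is_euclid_proj S P) (convS : convex_set S).

Lemma proj_obtuse u z : S z -> dotv (u - P u) (z - P u) <= 0.
Proof.
move=> Sz; have [SPu Pu_min] := projP u.
apply: dotv_le0_of_segment_min => t /andP[t_gt0 t_le1].
have S_t : S (t *: z + (1 - t) *: P u).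
  by apply: convex_set_segment => //; rewrite ltW.
have := Pu_min _ S_t; rewrite ler_enorm.
suff -> : u - (t *: z + (1 - t) *: P u) = u - P u - t *: (z - P u) by [].
by apply/matrixP => i j; rewrite !mxE; ring.
Qed.

Lemma proj_dist_le u z : S z -> dotv (P u - z) (P u - z) <= dotv (u - z) (u - z).
Proof.
move=> Sz; have := proj_obtuse u Sz; have := dotvv_ge0 (u - P u).
by rewrite !dotvE (dotvC (P u) u) (dotvC z u) (dotvC z (P u)); lra.
Qed.

Lemma proj_step_dist_le (g th z : 'rV[R]_d) (alpha ell G : R) :
  S z -> 0 <= alpha -> ell <= dotv g (th - z) -> dotv g g <= G ->
  dotv (P (th - alpha *: g) - z) (P (th - alpha *: g) - z)
  <= dotv (th - z) (th - z) - 2 * alpha * ell + alpha ^+ 2 * G.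
Proof.
move=> Sz alpha_ge0 ell_le g_le; apply: le_trans (proj_dist_le _ Sz) _.
have h1 : alpha * ell <= alpha * dotv g (th - z) by apply: ler_wpM2l.
have h2 : alpha ^+ 2 * dotv g g <= alpha ^+ 2 * G by apply: ler_wpM2l; rewrite ?sqr_ge0.
move: h1; rewrite !dotvE (dotvC th g) (dotvC z g) (dotvC z th); lra.
Qed.

Lemma mean_proj_step_le (T : Type) (r : seq T) (ell ell' : T -> R) (g : T -> 'rV[R]_d)
    (th z : 'rV[R]_d) (alpha G : R) :
  (0 < size r)%N -> S z -> 0 <= alpha ->
  (forall s, ell s - ell' s <= dotv (g s) (th - z)) -> (forall s, dotv (g s) (g s) <= G) ->
  mean r (fun s => dotv (P (th - alpha *: g s) - z) (P (th - alpha *: g s) - z))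
  <= dotv (th - z) (th - z) - 2 * alpha * (mean r ell - mean r ell') + alpha ^+ 2 * G.
Proof.
move=> r_gt0 Sz alpha_ge0 ell_le g_le.
apply: le_trans (mean_le _ (fun s => proj_step_dist_le Sz alpha_ge0 (ell_le s) (g_le s))) _.
by rewrite meanD meanB meanZ meanB !mean_cst.
Qed.

End Projection.

Section LogSumExp.
Context {R : realType} {I : finType}.
Implicit Types p a u v : I -> R.

Lemma expR_mean_le p a : (forall i, 0 <= p i) -> \sum_i p i = 1 ->
  expR (\sum_i p i * a i) <= \sum_i p i * expR (a i).
Proof.
move=> p_ge0 p_sum1; set m := \sum_i p i * a i.
have tangent_sum : \sum_i p i * (expR m * (1 + (a i - m))) = expR m.
  rewrite (eq_bigr (fun i => expR m * p i + expR m * (p i * a i) - expR m * m * p i));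
    last by move=> i _; ring.
  by rewrite sumrB big_split /= -!mulr_sumr p_sum1 -/m; ring.
rewrite -[X in X <= _]tangent_sum; apply: ler_sum => i _; apply: ler_wpM2l => //.
rewrite -[X in _ <= expR X](subrK m (a i)) expRD mulrC.
by apply: ler_wpM2r; [exact: expR_ge0 | exact: expR_ge1Dx].
Qed.

Lemma sum_expR_gt0 (i0 : I) u : 0 < \sum_i expR (u i).
Proof.
rewrite (bigD1 i0) //=; have := expR_gt0 (u i0).
have : 0 <= \sum_(i | i != i0) expR (u i) by apply: sumr_ge0 => i _; exact: expR_ge0.
lra.
Qed.

Lemma ln_sum_expR_ge_tangent u v :
  \sum_i expR (u i) / (\sum_j expR (u j)) * (v i - u i)
  <= ln (\sum_i expR (v i)) - ln (\sum_i expR (u i)).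
Proof.
case: (pickP (@predT I)) => [i0 _ | I0]; last by rewrite !big1 ?subrr // => i; have := I0 i.
have Zu_gt0 := sum_expR_gt0 i0 u; have Zv_gt0 := sum_expR_gt0 i0 v.
pose p i := expR (u i) / (\sum_j expR (u j)).
have p_ge0 i : 0 <= p i by rewrite divr_ge0 ?expR_ge0 ?ltW.
have p_sum1 : \sum_i p i = 1 by rewrite -mulr_suml divff ?gt_eqF.
have -> : ln (\sum_i expR (v i)) - ln (\sum_i expR (u i)) =
    ln (\sum_i p i * expR (v i - u i)).
  rewrite -ln_div ?posrE //; congr ln; rewrite mulr_suml; apply: eq_bigr => i _.
  by rewrite /p expRB; field; rewrite !gt_eqF ?expR_gt0.
have jensen := expR_mean_le (fun i => v i - u i) p_ge0 p_sum1.
rewrite -[X in X <= _]expRK ler_ln ?posrE ?expR_gt0 //.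
exact: lt_le_trans (expR_gt0 _) jensen.
Qed.

End LogSumExp.

Section Policy.
Context {R : realType} {d : nat} {X : Type} {Y : finType}.
Variable phi : Y -> X -> 'rV[R]_d.
Implicit Types (th z : 'rV[R]_d) (x : X) (y : Y).

Notation pi := (Defs.pi phi).

Lemma policy_gt0 th y x : 0 < pi th y x.
Proof. by rewrite divr_gt0 ?expR_gt0 ?(sum_expR_gt0 y). Qed.

Lemma sum_policy th x (y : Y) : \sum_(y' : Y) pi th y' x = 1.
Proof. by rewrite -mulr_suml divff // gt_eqF ?(sum_expR_gt0 y). Qed.

Lemma ln_policy th y x :
  ln (pi th y x) = dotv th (phi y x) - ln (\sum_(y' : Y) expR (dotv th (phi y' x))).
Proof. by rewrite ln_div ?posrE ?expR_gt0 ?(sum_expR_gt0 y) // expRK. Qed.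

Definition sft_loss th (s : X * Y) : R := - ln (pi th s.2 s.1).

Lemma sft_loss_subgrad th z s :
  sft_loss th s - sft_loss z s <= dotv (g_SFT phi th s) (th - z).
Proof.
case: s => x y; rewrite /sft_loss /g_SFT /grad_logpi /= !ln_policy.
have mean_dotv w : dotv (\sum_y' pi th y' x *: phi y' x) w =
    \sum_y' pi th y' x * dotv w (phi y' x).
  by rewrite dotv_suml; apply: eq_bigr => y' _; rewrite dotvZl dotvC.
have := ln_sum_expR_ge_tangent (fun y => dotv th (phi y x)) (fun y => dotv z (phi y x)).
have -> : \sum_y' pi th y' x * (dotv z (phi y' x) - dotv th (phi y' x)) =
    \sum_y' pi th y' x * dotv z (phi y' x) - \sum_y' pi th y' x * dotv th (phi y' x).
  by rewrite -sumrB; apply: eq_bigr => y' _; rewrite mulrBr.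
rewrite dotvNl !dotvE !mean_dotv !(dotvC (phi y x)); lra.
Qed.

Lemma sigmoid_itv (t : R) : 0 < sigmoid t < 1.
Proof.
have e_gt0 := expR_gt0 (- t).
by rewrite divr_gt0 ?ltr_pdivrMr ?mul1r /=; lra.
Qed.

(* The softplus -ln (sigmoid t) = ln (e^0 + e^-t) is a log-sum-exp over two points. *)
Lemma softplus_subgrad (t t' : R) :
  - ln (sigmoid t) - - ln (sigmoid t') <= (1 - sigmoid t) * (t' - t).
Proof.
have softplusE s : - ln (sigmoid s) = ln (\sum_(b : bool) expR (if b then 0 else - s)).
  by rewrite big_bool /= expR0 /sigmoid div1r lnV ?opprK // posrE addr_gt0 ?expR_gt0.
have := ln_sum_expR_ge_tangent (fun b : bool => if b then 0 else - t)
  (fun b : bool => if b then 0 else - t').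
rewrite -!softplusE !big_bool /= expR0 subrr mulr0 add0r.
have -> : 1 - sigmoid t = expR (- t) / (1 + expR (- t)).
  by rewrite /sigmoid; field; rewrite gt_eqF // addr_gt0 ?expR_gt0.
lra.
Qed.

Variables (theta_ref : 'rV[R]_d) (beta : R).

Definition dpo_loss th (s : X * Y * Y) : R :=
  - ln (sigmoid (h_beta phi theta_ref beta th s)).

Lemma h_beta_sub th z (s : X * Y * Y) :
  h_beta phi theta_ref beta z s - h_beta phi theta_ref beta th s =
  - dotv (grad_h_beta phi beta th s) (th - z).
Proof.
case: s => [[x yw] yl]; rewrite /h_beta /grad_h_beta /grad_logpi.
rewrite !(ln_div (policy_gt0 _ _ _) (policy_gt0 _ _ _)) !ln_policy.
by rewrite dotvZl !dotvE !(dotvC (phi _ _)) !dotv_suml; ring.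
Qed.

Lemma dpo_loss_subgrad th z s :
  dpo_loss th s - dpo_loss z s <= dotv (g_DPO phi theta_ref beta th s) (th - z).
Proof.
apply: le_trans (softplus_subgrad _ _) _.
by rewrite h_beta_sub /g_DPO dotvNl dotvZl mulrN.
Qed.

Variable Phi : R.
Hypothesis phi_le : forall x y, dotv (phi y x) (phi y x) <= Phi ^+ 2.

Lemma g_SFT_le th s : dotv (g_SFT phi th s) (g_SFT phi th s) <= 4 * Phi ^+ 2.
Proof.
case: s => x y; rewrite /g_SFT /grad_logpi /= dotvNl dotvNr opprK.
have mean_le : dotv (\sum_y' pi th y' x *: phi y' x) (\sum_y' pi th y' x *: phi y' x)
    <= Phi ^+ 2.
  apply: le_trans (dotvv_mean_le _ _ (sum_policy th x y)) _.
    by move=> y'; exact: ltW (policy_gt0 _ _ _).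
  rewrite -[leRHS]mul1r -(sum_policy th x y) mulr_suml.
  by apply: ler_sum => y' _; apply: ler_wpM2l; [exact: ltW (policy_gt0 _ _ _) | exact: phi_le].
have := dotvv_subr_le (phi y x) (\sum_y' pi th y' x *: phi y' x).
by have := phi_le x y; lra.
Qed.

Lemma g_DPO_le th s :
  dotv (g_DPO phi theta_ref beta th s) (g_DPO phi theta_ref beta th s)
  <= 4 * beta ^+ 2 * Phi ^+ 2.
Proof.
case: s => [[x yw] yl]; rewrite /g_DPO /grad_h_beta.
have -> : grad_logpi phi th yw x - grad_logpi phi th yl x = phi yw x - phi yl x.
  by rewrite /grad_logpi opprB addrA subrK.
set q := 1 - _; set D := dotv (phi yw x - phi yl x) (phi yw x - phi yl x).
have q_01 : 0 <= q <= 1.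
  by have := sigmoid_itv (h_beta phi theta_ref beta th (x, yw, yl)); rewrite /q; lra.
have D_le : D <= 4 * Phi ^+ 2.
  rewrite /D; have := dotvv_subr_le (phi yw x) (phi yl x).
  by have := phi_le x yw; have := phi_le x yl; lra.
have qq_01 : 0 <= q * q <= 1 by nra.
have bD_le : 0 <= beta ^+ 2 * D <= beta ^+ 2 * (4 * Phi ^+ 2).
  by rewrite mulr_ge0 ?sqr_ge0 ?dotvv_ge0 ?ler_wpM2l ?sqr_ge0.
rewrite dotvNl dotvNr opprK !(dotvZl, dotvZr) -/D.
have -> : q * (beta * (q * (beta * D))) = (q * q) * (beta ^+ 2 * D) by ring.
nra.
Qed.

End Policy.

Lemma last_le_mean_harmonic {R : realFieldType} (a : nat -> R) (c : R) N :
  (forall k, (k <= N)%N ->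
     \sum_(m < k.+1) (a (N - k + m)%N - a (N - k)%N) <= k.+1%:R * c) ->
  a N <= (\sum_(t < N.+1) a t) / N.+1%:R + c * \sum_(i < N) i.+1%:R^-1.
Proof.
move=> suffix_le.
pose s k := (\sum_(m < k.+1) a (N - k + m)%N) / k.+1%:R.
have s_step k : (k < N)%N -> s k <= s k.+1 + c / k.+1%:R.
  move=> lt_kN; set x := \sum_(m < k.+1) a (N - k + m)%N; set j := (N - k.+1)%N.
  have sum_split : \sum_(m < k.+2) a (N - k.+1 + m)%N = a j + x.
    rewrite big_ord_recl addn0; congr (_ + _); apply: eq_bigr => i _.
    by congr a; rewrite lift0 /=; lia.
  have := suffix_le k.+1 lt_kN.
  rewrite sumrB sumr_const card_ord sum_split -[_ *+ k.+2]mulr_natr.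
  rewrite /s -/x sum_split -[k.+2%:R]natr1.
  have p_gt0 : 0 < k.+1%:R :> R by rewrite ltr0n.
  set p := k.+1%:R => H.
  have -> : x / p = (x - c) / p + c / p by rewrite -mulrDl subrK.
  rewrite lerD2r ler_pdivrMr // mulrAC ler_pdivlMr ?ltr_wpDr //; nra.
have suffix_mean_le k : (k <= N)%N -> a N <= s k + c * \sum_(i < k) i.+1%:R^-1.
  elim: k => [_ | k IH lt_kN].
    by rewrite /s big_ord1 big_ord0 subn0 addn0 divr1 mulr0 addr0.
  apply: le_trans (IH (ltnW lt_kN)) _.
  by rewrite big_ord_recr /= mulrDr [X in _ <= _ + X]addrC addrA lerD2r s_step.
have := suffix_mean_le N (leqnn N); rewrite /s subnn.
by under eq_bigr do rewrite add0n.
Qed.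

Section LastIterate.
Context {R : realType} {V : Type}.
(* K h th is the expected value of h at the next iterate of a method started at th. *)
Variables (S : set V) (K : (V -> R) -> V -> R).
Hypothesis K_le : forall h1 h2 th,
  S th -> (forall u, S u -> h1 u <= h2 u) -> K h1 th <= K h2 th.
Hypothesis K_add : forall h1 h2 th, K (fun u => h1 u + h2 u) th = K h1 th + K h2 th.
Hypothesis K_scale : forall a h th, K (fun u => a * h u) th = a * K h th.
Hypothesis K_cst : forall c th, K (fun=> c) th = c.

Lemma iter_le n h1 h2 th :
  S th -> (forall u, S u -> h1 u <= h2 u) -> iter n K h1 th <= iter n K h2 th.
Proof.
elim: n th => [|n IH] th Sth h12 /=; first exact: h12.
by apply: K_le => // u Su; exact: IH.
Qed.

Lemma iter_add n h1 h2 th :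
  iter n K (fun u => h1 u + h2 u) th = iter n K h1 th + iter n K h2 th.
Proof. by elim: n th => //= n IH th; rewrite -K_add; congr K; apply: funext. Qed.

Lemma iter_scale n a h th : iter n K (fun u => a * h u) th = a * iter n K h th.
Proof. by elim: n th => //= n IH th; rewrite -K_scale; congr K; apply: funext. Qed.

Lemma iter_cst n c th : iter n K (fun=> c) th = c.
Proof. by elim: n th => //= n IH th; rewrite -[RHS](K_cst c th); congr K; apply: funext. Qed.

Lemma iter_ge0 n h th : S th -> (forall u, S u -> 0 <= h u) -> 0 <= iter n K h th.
Proof. by move=> Sth h_ge0; rewrite -(iter_cst n 0 th) iter_le. Qed.

Lemma iter_sum n k (F : nat -> V -> R) th :
  iter n K (fun u => \sum_(m < k) F m u) th = \sum_(m < k) iter n K (F m) th.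
Proof.
elim: k th => [|k IH] th.
  have -> : (fun u => \sum_(m < 0) F m u) = fun=> 0 by apply: funext => u; rewrite big_ord0.
  by rewrite iter_cst big_ord0.
rewrite big_ord_recr /= -IH -iter_add; congr (iter n K _ th); apply: funext => u.
by rewrite big_ord_recr.
Qed.

Variables (dist : V -> V -> R) (f : V -> R) (alpha G : R).
Hypothesis alpha_gt0 : 0 < alpha.
Hypothesis dist_ge0 : forall u z, 0 <= dist u z.
Hypothesis dist_xx : forall z, dist z z = 0.
Hypothesis K_descent : forall z th, S z -> S th ->
  K (dist^~ z) th <= dist th z - 2 * alpha * (f th - f z) + alpha ^+ 2 * G.

Lemma iter_descent m z th : S z -> S th ->
  iter m.+1 K (dist^~ z) th
  <= iter m K (dist^~ z) th - 2 * alpha * (iter m K f th - f z) + alpha ^+ 2 * G.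
Proof.
move=> Sz Sth; rewrite iterSr.
apply: le_trans (iter_le m (h2 := fun u => dist u z + (- (2 * alpha) * f u
  + (2 * alpha * f z + alpha ^+ 2 * G))) _ _) _ => // [u Su|].
  by have := K_descent Sz Su; lra.
by rewrite !iter_add !iter_scale !iter_cst; lra.
Qed.

Lemma sum_gap_le N z th : S z -> S th ->
  2 * alpha * \sum_(k < N) (iter k K f th - f z) <= dist th z + N%:R * (alpha ^+ 2 * G).
Proof.
move=> Sz Sth.
suff : 2 * alpha * \sum_(k < N) (iter k K f th - f z)
    <= dist th z - iter N K (dist^~ z) th + N%:R * (alpha ^+ 2 * G).
  by have := iter_ge0 N Sth (fun u _ => dist_ge0 u z); lra.
elim: N => [|N IH]; first by rewrite big_ord0 /=; lra.
have := iter_descent N Sz Sth.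
by rewrite big_ord_recr /= mulrDr -natr1 mulrDl mul1r; lra.
Qed.

Lemma suffix_gap_le j k th : S th ->
  \sum_(m < k) (iter (j + m) K f th - iter j K f th) <= k%:R * (alpha * G / 2).
Proof.
move=> Sth.
(* Restart the method at z, taking z itself as the comparator point. *)
have restart_le z : S z -> \sum_(m < k) iter m K f z <= k%:R * f z + k%:R * (alpha * G / 2).
  move=> Sz; have := sum_gap_le k Sz Sz; rewrite dist_xx sumrB sumr_const card_ord.
  rewrite -[f z *+ k]mulr_natr expr2 => gap_le.
  by rewrite -(ler_pM2l (_ : 0 < 2 * alpha)) ?mulr_gt0 //; lra.
have := iter_le j (h1 := fun z => \sum_(m < k) iter m K f z) Sth restart_le.
rewrite iter_sum iter_add !iter_scale iter_cst.
by under eq_bigr do rewrite -iterD; rewrite sumrB sumr_const card_ord -mulr_natl; lra.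
Qed.

Theorem last_iterate_gap_le N th z : S th -> S z ->
  iter N K f th - f z
  <= dist th z / (2 * alpha * N.+1%:R) + alpha * G / 2 * (1 + \sum_(i < N) i.+1%:R^-1).
Proof.
move=> Sth Sz; set T : R := N.+1%:R.
have T_gt0 : 0 < T by rewrite ltr0n.
have last_le := last_le_mean_harmonic (a := fun t => iter t K f th) (c := alpha * G / 2)
  (fun k _ => suffix_gap_le (N - k) k.+1 Sth).
have mean_le : (\sum_(t < N.+1) iter t K f th) / T - f z
    <= dist th z / (2 * alpha * T) + alpha * G / 2.
  have -> : (\sum_(t < N.+1) iter t K f th) / T - f z
      = (\sum_(t < N.+1) (iter t K f th - f z)) / T.
    by rewrite sumrB sumr_const card_ord -mulr_natr mulrBl mulfK ?gt_eqF.
  have -> : dist th z / (2 * alpha * T) + alpha * G / 2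
      = (dist th z + T * (alpha ^+ 2 * G)) / (2 * alpha) / T.
    by field; rewrite !gt_eqF.
  rewrite ler_pM2r ?invr_gt0 // ler_pdivlMr ?mulr_gt0 // mulrC.
  exact: sum_gap_le.
apply: le_trans (lerB last_le (lexx (f z))) _.
by rewrite addrAC mulrDr mulr1 addrA lerD2r.
Qed.

End LastIterate.

Section Alright.
Context {R : realType} {d : nat} {X : Type} {Y : finType}.
Variables (phi : Y -> X -> 'rV[R]_d) (theta_ref : 'rV[R]_d) (beta : R).
Variables (D1 : seq (X * Y * Y)) (D2 : seq (X * Y)).
Variables (P : 'rV[R]_d -> 'rV[R]_d) (alpha lambda : R).

Definition alright_step (h : 'rV[R]_d -> R) (th : 'rV[R]_d) : R :=
  lambda * mean D1 (fun s => h (P (th - alpha *: g_DPO phi theta_ref beta th s)))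
  + (1 - lambda) * mean D2 (fun s => h (P (th - alpha *: g_SFT phi th s))).

Lemma alright_expectE F n :
  alright_expect phi theta_ref beta D1 D2 P alpha lambda F n = iter n alright_step F.
Proof. by elim: n => //= n <-. Qed.

Lemma f_DPOE th : f_DPO phi theta_ref beta D1 th = mean D1 (dpo_loss phi theta_ref beta th).
Proof. by rewrite /dpo_loss meanN. Qed.

Lemma f_SFTE th : f_SFT phi D2 th = mean D2 (sft_loss phi th).
Proof. by rewrite /sft_loss meanN. Qed.

Variable S : set 'rV[R]_d.
Hypotheses (projP : is_euclid_proj S P) (convS : convex_set S).
Hypotheses (lambda_ge0 : 0 <= lambda) (lambda_le1 : lambda <= 1).
Hypotheses (D1_gt0 : (0 < size D1)%N) (D2_gt0 : (0 < size D2)%N).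

Lemma alright_step_le h1 h2 th :
  S th -> (forall u, S u -> h1 u <= h2 u) -> alright_step h1 th <= alright_step h2 th.
Proof.
move=> _ h12; have SP u : S (P u) by case: (projP u).
by apply: lerD; apply: ler_wpM2l; rewrite ?subr_ge0 //; apply: mean_le => s; apply: h12.
Qed.

Lemma alright_step_add h1 h2 th :
  alright_step (fun u => h1 u + h2 u) th = alright_step h1 th + alright_step h2 th.
Proof. by rewrite /alright_step !meanD; ring. Qed.

Lemma alright_step_scale a h th :
  alright_step (fun u => a * h u) th = a * alright_step h th.
Proof. by rewrite /alright_step !meanZ; ring. Qed.

Lemma alright_step_cst c th : alright_step (fun=> c) th = c.
Proof. by rewrite /alright_step !mean_cst //; ring. Qed.

Variable G : R.
Hypothesis alpha_gt0 : 0 < alpha.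
Hypothesis g_DPO_le : forall th s,
  dotv (g_DPO phi theta_ref beta th s) (g_DPO phi theta_ref beta th s) <= G.
Hypothesis g_SFT_le : forall th s, dotv (g_SFT phi th s) (g_SFT phi th s) <= G.

Notation f := (objective phi theta_ref beta D1 D2 lambda).

Lemma alright_step_descent z th : S z ->
  alright_step (fun u => dotv (u - z) (u - z)) th
  <= dotv (th - z) (th - z) - 2 * alpha * (f th - f z) + alpha ^+ 2 * G.
Proof.
move=> Sz; have alpha_ge0 := ltW alpha_gt0.
have mix (c M1 M2 a1 b1 a2 b2 : R) :
    M1 <= c - 2 * alpha * (a1 - b1) + alpha ^+ 2 * G ->
    M2 <= c - 2 * alpha * (a2 - b2) + alpha ^+ 2 * G ->
    lambda * M1 + (1 - lambda) * M2 <= c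
      - 2 * alpha * (lambda * a1 + (1 - lambda) * a2 - (lambda * b1 + (1 - lambda) * b2))
      + alpha ^+ 2 * G.
  move=> /(ler_wpM2l lambda_ge0) le1 /(ler_wpM2l (_ : 0 <= 1 - lambda)).
  by rewrite subr_ge0 => /(_ lambda_le1); lra.
rewrite /alright_step; apply: mix; rewrite ?f_DPOE ?f_SFTE;
  apply: mean_proj_step_le => // s.
- exact: dpo_loss_subgrad.
- exact: sft_loss_subgrad.
Qed.

Theorem alright_gap_le N theta1 theta_star :
  S theta1 -> S theta_star -> (forall th, S th -> f theta_star <= f th) ->
  0 <= iter N alright_step (fun th => f th - f theta_star) theta1
    <= dotv (theta1 - theta_star) (theta1 - theta_star) / (2 * alpha * N.+1%:R)
       + alpha * G / 2 * (1 + \sum_(i < N) i.+1%:R^-1).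
Proof.
move=> S1 Sstar star_min; apply/andP; split.
  apply: (iter_ge0 alright_step_le alright_step_cst N) => // u Su.
  by rewrite subr_ge0 star_min.
rewrite (iter_add alright_step_add) (iter_cst alright_step_cst).
apply: (last_iterate_gap_le (dist := fun u z => dotv (u - z) (u - z)) alright_step_le
  alright_step_add alright_step_scale alright_step_cst alpha_gt0) => // [u z | z | z th Sz _].
- exact: dotvv_ge0.
- by rewrite subrr /dotv big1 // => i _; rewrite mxE mul0r.
- exact: alright_step_descent.
Qed.

End Alright.

Section Rate.
Context {R : realType}.

Lemma invn_le_ln_diff n : (n.+2%:R : R)^-1 <= ln n.+2%:R - ln n.+1%:R.
Proof.
have n1_gt0 : 0 < (n.+1%:R : R) by rewrite ltr0n.
have n2_gt0 : 0 < (n.+2%:R : R) by rewrite ltr0n.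
have : -1 < - (n.+2%:R : R)^-1 by rewrite ltrN2 invf_lt1 // ltr1n.
move=> /le_ln1Dx; have -> : 1 - (n.+2%:R : R)^-1 = n.+1%:R / n.+2%:R.
  by rewrite -[n.+2%:R]natr1; field; rewrite gt_eqF // -natr1.
by rewrite ln_div ?posrE // -(opprB (ln n.+1%:R)) lerNr.
Qed.

Lemma harmonic_le_ln n : \sum_(i < n.+1) (i.+1%:R : R)^-1 <= 1 + ln n.+1%:R.
Proof.
elim: n => [|n IH]; first by rewrite big_ord1 ln1 invr1 addr0.
rewrite big_ord_recr /=; apply: le_trans (lerD IH (invn_le_ln_diff n)) _; lra.
Qed.

Lemma expR1_le4 : expR 1 <= 4 :> R.
Proof.
have half_le : 1 / 2 <= expR (- (1 / 2)) :> R by have := expR_ge1Dx (- (1 / 2) : R); lra.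
have sqrt_e_le2 : expR (1 / 2) <= 2 :> R.
  by have := expRxMexpNx_1 (1 / 2 : R); have := expR_gt0 (1 / 2 : R); nra.
have -> : expR 1 = expR (1 / 2) * expR (1 / 2) :> R by rewrite -expRD -splitr.
apply: le_trans (ler_pM (expR_ge0 _) (expR_ge0 _) sqrt_e_le2 sqrt_e_le2) _; lra.
Qed.

Lemma ln_ge1 n : (4 <= n)%N -> 1 <= ln (n%:R : R).
Proof.
move=> n_ge4; rewrite -[X in X <= _](expRK 1) ler_ln ?posrE ?expR_gt0 ?ltr0n //; last by lia.
by apply: le_trans expR1_le4 _; rewrite ler_nat.
Qed.

Lemma sgd_rate_le (D G alpha0 : R) N : 0 <= D -> 0 <= G -> 0 < alpha0 -> (3 <= N)%N ->
  D / (2 * (alpha0 / Num.sqrt N.+1%:R) * N.+1%:R)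
  + alpha0 / Num.sqrt N.+1%:R * G / 2 * (1 + \sum_(i < N) i.+1%:R^-1)
  <= (D / (2 * alpha0) + 3 / 2 * alpha0 * G) * (ln N.+1%:R / Num.sqrt N.+1%:R).
Proof.
move=> D_ge0 G_ge0 alpha0_gt0 N_ge3.
have L_ge1 : 1 <= ln (N.+1%:R : R) by apply: ln_ge1.
have H_le : \sum_(i < N) (i.+1%:R : R)^-1 <= 1 + ln N.+1%:R.
  by apply: le_trans (harmonic_le_ln N); rewrite big_ord_recr /= lerDl invr_ge0 ler0n.
move: L_ge1 H_le; set T : R := N.+1%:R; set L := ln T; set H := \sum_(i < N) _.
move=> L_ge1 H_le.
have [s s_gt0 sqrtT] : exists2 s, 0 < s & Num.sqrt T = s.
  by exists (Num.sqrt T); rewrite ?sqrtr_gt0 ?ltr0n.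
have T_eq : T = s ^+ 2 by rewrite -sqrtT sqr_sqrtr ?ler0n.
rewrite sqrtT T_eq.
set k1 := D / (2 * alpha0); set k2 := alpha0 * G / 2.
have k1s_ge0 : 0 <= k1 / s by rewrite /k1 !divr_ge0 ?mulr_ge0 ?(ltW alpha0_gt0) ?(ltW s_gt0).
have k2s_ge0 : 0 <= k2 / s by rewrite /k2 !divr_ge0 ?mulr_ge0 ?(ltW alpha0_gt0) ?(ltW s_gt0).
have -> : D / (2 * (alpha0 / s) * s ^+ 2) = k1 / s by rewrite /k1; field; rewrite !gt_eqF.
have -> : alpha0 / s * G / 2 * (1 + H) = k2 / s * (1 + H) by rewrite /k2; field; rewrite gt_eqF.
have -> : (k1 + 3 / 2 * alpha0 * G) * (L / s) = k1 / s * L + k2 / s * (3 * L).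
  by rewrite /k2; field; rewrite gt_eqF.
apply: lerD; first by rewrite -[leLHS]mulr1 ler_wpM2l.
by rewrite ler_wpM2l //; lra.
Qed.

End Rate.

Theorem theorem4p1 (R : realType) (d : nat) (X : Type) (Y : finType)
  (phi : Y -> X -> 'rV[R]_d) (Phi : R) (hPhi : 0 < Phi)
  (hbound : forall (x : X) (y : Y), enorm (phi y x) <= Phi)
  (theta_ref : 'rV[R]_d) (beta : R) (hbeta : 0 < beta)
  (D1 : seq (X * Y * Y)) (D2 : seq (X * Y))
  (hD1 : (0 < size D1)%N) (hD2 : (0 < size D2)%N)
  (Theta : set 'rV[R]_d) (hclosed : closed (Theta : set 'rV[R^o]_d)) (hconvex : convex_set Theta)
  (P : 'rV[R]_d -> 'rV[R]_d) (hP : is_euclid_proj Theta P)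
  (theta1 : 'rV[R]_d) (htheta1 : Theta theta1)
  (lambda : R) (hlambda : 0 <= lambda <= 1)
  (theta_star : 'rV[R]_d) (hstar_in : Theta theta_star)
  (hstar_min : forall th, Theta th ->
     objective phi theta_ref beta D1 D2 lambda theta_star
     <= objective phi theta_ref beta D1 D2 lambda th)
  (alpha0 : R) (halpha0 : 0 < alpha0) :
  exists C : R, exists T0 : nat, forall T : nat, (T0 <= T)%N ->
    `| alright_expect phi theta_ref beta D1 D2 P
         (alpha0 / Num.sqrt T%:R) lambda
         (fun th => objective phi theta_ref beta D1 D2 lambda th
                    - objective phi theta_ref beta D1 D2 lambda theta_star)
         T.-1 theta1 |
    <= C * (ln (T%:R : R) / Num.sqrt (T%:R : R)).
Proof.
(* hclosed only serves the existence of the projection, which hP provides. *)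
move/andP: hlambda => [lambda_ge0 lambda_le1].
have phi_le x y : dotv (phi y x) (phi y x) <= Phi ^+ 2.
  by rewrite dotvv_enorm ler_pXn2r ?nnegrE ?sqrtr_ge0 ?(ltW hPhi) ?hbound.
pose G := 4 * Phi ^+ 2 + 4 * beta ^+ 2 * Phi ^+ 2.
have bPhi_ge0 : 0 <= beta ^+ 2 * Phi ^+ 2 by rewrite mulr_ge0 ?sqr_ge0.
have G_ge0 : 0 <= G by rewrite /G; have := sqr_ge0 Phi; lra.
have g_DPO_G th s : dotv (g_DPO phi theta_ref beta th s) (g_DPO phi theta_ref beta th s) <= G.
  by apply: le_trans (g_DPO_le theta_ref beta phi_le th s) _; rewrite /G; have := sqr_ge0 Phi; lra.
have g_SFT_G th s : dotv (g_SFT phi th s) (g_SFT phi th s) <= G.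
  by apply: le_trans (g_SFT_le phi_le th s) _; rewrite /G; lra.
exists (dotv (theta1 - theta_star) (theta1 - theta_star) / (2 * alpha0) + 3 / 2 * alpha0 * G).
exists 4%N => -[//|N] N_ge3.
have alpha_gt0 : 0 < alpha0 / Num.sqrt N.+1%:R by rewrite divr_gt0 ?sqrtr_gt0 ?ltr0n.
have /andP[gap_ge0 gap_le] := alright_gap_le hP hconvex lambda_ge0 lambda_le1 hD1 hD2
  alpha_gt0 g_DPO_G g_SFT_G N htheta1 hstar_in hstar_min.
rewrite alright_expectE /= ger0_norm //.
exact: le_trans gap_le (sgd_rate_le (dotvv_ge0 _) G_ge0 halpha0 N_ge3).
Qed.
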